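(* Let $\alpha>2$ and consider the equation in the unknown $\Lambda>0$ \[ \int_0^\infty\frac{1-\Lambda x^{2/\alpha}}{1+x}\,e^{-2\Lambda x^{2/\alpha}}\,dx=0 . \] If $\alpha\le4$ this equation has no solution $\Lambda>0$, and if $\alpha>4$ it has exactly one solution $\Lambda>0$.
   Context: The solution for $\alpha>4$ is denoted $\Lambda''(\alpha)$ in the paper. *)

From Stdlib Require Import Reals.
From Coquelicot Require Import Coquelicot.
Open Scope R_scope.

(* Real power x^a for x > 0, extended by 0 at x <= 0 (only x = 0 matters,
   a single point, irrelevant for the integral). *)
Definition rpow (x a : R) : R :=
  if Rlt_dec 0 x then Rpower x a else 0.

Definition integrand (alpha L x : R) : R :=
  (1 - L * rpow x (2 / alpha)) / (1 + x) * exp (- (2 * L * rpow x (2 / alpha))).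

Definition solves (alpha L : R) : Prop :=
  is_RInt_gen (integrand alpha L) (at_point 0) (Rbar_locally p_infty) 0.

From Stdlib Require Import Reals Lra Psatz.
From Coquelicot Require Import Coquelicot.
Open Scope R_scope.

(* With b = 2/alpha, let u(x) = (2bx + 2b - 1)/(1+x)^2, g_L(x) = e^{-2L x^b} u(x) and
   K_L(x) = x e^{-2L x^b}/(1+x).  Then K_L' = 2b f_L - g_L for the integrand f_L, and K_L vanishes
   at 0 and at infinity, so L is a solution iff G(L) = \int_0^oo g_L = 0.
   If b >= 1/2 then u >= 0, so G > 0.  If b < 1/2, u changes sign exactly once, at x0.  Multiplying
   by e^{2L x0^b} turns the damping factor into e^{-2L (x^b - x0^b)}, after which the integrand is
   pointwise nonincreasing in L, strictly on [0, x0/2]; hence e^{2L x0^b} G(L) is strictly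
   decreasing and G has at most one zero.  G is positive for small L, negative for large L and
   locally Lipschitz, so it does vanish. *)

Lemma exp_le x y : x <= y -> exp x <= exp y.
Proof. intros [Hxy | <-]; [left; apply exp_increasing | right]; auto. Qed.

Lemma rpow_nonpos x b : x <= 0 -> rpow x b = 0.
Proof. intros Hx; unfold rpow; destruct (Rlt_dec 0 x); [lra | reflexivity]. Qed.

Lemma rpow_pos x b : 0 < x -> rpow x b = exp (b * ln x).
Proof. intros Hx; unfold rpow; destruct (Rlt_dec 0 x); [reflexivity | lra]. Qed.

Lemma rpow_ge0 x b : 0 <= rpow x b.
Proof.
  destruct (Rle_lt_dec x 0).
  - rewrite rpow_nonpos; lra.
  - rewrite rpow_pos by lra; left; apply exp_pos.
Qed.

Lemma rpow_gt0 x b : 0 < x -> 0 < rpow x b.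
Proof. intros Hx; rewrite rpow_pos by lra; apply exp_pos. Qed.

Lemma ln_rpow x b : 0 < x -> ln (rpow x b) = b * ln x.
Proof. intros Hx; rewrite rpow_pos, ln_exp; auto. Qed.

Lemma rpow_lt x y b : 0 < b -> 0 <= x < y -> rpow x b < rpow y b.
Proof.
  intros Hb [[Hx | <-] Hxy].
  - rewrite !rpow_pos by lra. apply exp_increasing, Rmult_lt_compat_l; auto.
    apply ln_increasing; lra.
  - rewrite rpow_nonpos by lra. apply rpow_gt0; lra.
Qed.

Lemma rpow_le x y b : 0 < b -> 0 <= x <= y -> rpow x b <= rpow y b.
Proof. intros Hb [Hx [Hxy | <-]]; [left; apply rpow_lt | right]; auto. Qed.

Lemma rpow_le_1 x b : 0 < b -> 0 <= x <= 1 -> rpow x b <= 1.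
Proof.
  intros Hb Hx. assert (H1 : rpow 1 b = 1) by (rewrite rpow_pos, ln_1, Rmult_0_r, exp_0; lra).
  rewrite <- H1; apply rpow_le; lra.
Qed.

Lemma is_derive_rpow x b : 0 < x -> is_derive (fun y => rpow y b) x (b * rpow x b / x).
Proof.
  intros Hx. apply is_derive_ext_loc with (fun y => exp (b * ln y)).
  - exists (mkposreal x Hx); intros y Hy. apply Rabs_def2 in Hy.
    rewrite rpow_pos; auto. simpl in Hy. unfold minus, plus, opp in Hy; simpl in Hy. lra.
  - rewrite rpow_pos by auto. auto_derive; [lra | field; lra].
Qed.

Lemma continuous_rpow_0 b : 0 < b -> continuous (fun y => rpow y b) 0.
Proof.
  intros Hb. apply continuity_pt_filterlim. intros eps Heps.
  exists (exp (ln eps / b)); split; [apply exp_pos |].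
  intros x [_ Hx]. simpl in *. unfold R_dist in *.
  rewrite (rpow_nonpos 0), Rminus_0_r in * by lra.
  destruct (Rle_lt_dec x 0) as [Hx0 | Hx0].
  - rewrite rpow_nonpos, Rabs_R0; auto.
  - rewrite Rabs_pos_eq in Hx by lra. rewrite Rabs_pos_eq by apply rpow_ge0.
    rewrite rpow_pos, <- (exp_ln eps) by auto. apply exp_increasing.
    assert (Hln : ln x < ln eps / b) by (rewrite <- (ln_exp (ln eps / b)); apply ln_increasing; lra).
    apply Rmult_lt_reg_r with (/ b); [apply Rinv_0_lt_compat; auto |].
    replace (b * ln x * / b) with (ln x) by (field; lra). exact Hln.
Qed.

Lemma continuous_rpow x b : 0 < b -> 0 <= x -> continuous (fun y => rpow y b) x.
Proof.
  intros Hb [Hx | <-]; [| apply continuous_rpow_0; auto].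
  apply (ex_derive_continuous (fun y => rpow y b)). eexists; apply is_derive_rpow; auto.
Qed.

(* Used at [x = 0], where [x^b] is not differentiable. *)
Lemma is_derive_mul_id_0 (phi : R -> R) :
  continuous phi 0 -> is_derive (fun x => x * phi x) 0 (phi 0).
Proof.
  intros Hphi. apply is_derive_Reals. intros eps Heps.
  apply continuity_pt_filterlim in Hphi.
  destruct (Hphi eps Heps) as [d [Hd Hphid]].
  exists (mkposreal d Hd). intros h Hh0 Hh. rewrite Rplus_0_l.
  replace ((h * phi h - 0 * phi 0) / h - phi 0) with (phi h - phi 0) by (field; auto).
  apply (Hphid h). split; [split; [exact I | auto] |].
  simpl; unfold R_dist; rewrite Rminus_0_r; exact Hh.
Qed.

Lemma exp_rpow_decay m b : 0 < m -> 0 < b ->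
  exists C, forall x, 0 <= x -> (1 + x) * exp (- (m * rpow x b)) <= C.
Proof.
  intros Hm Hb. set (C0 := exp (- (1 + ln (m * b)) / b)).
  exists (1 + C0). intros x Hx.
  assert (HE : exp (- (m * rpow x b)) <= 1).
  { rewrite <- exp_0. apply exp_le. pose proof (rpow_ge0 x b). nra. }
  assert (x * exp (- (m * rpow x b)) <= C0).
  { destruct Hx as [Hx | <-]; [| unfold C0; rewrite Rmult_0_l; left; apply exp_pos].
    set (p := rpow x b). assert (Hp : 0 < p) by (apply rpow_gt0; auto).
    (* [ln (m b p) <= m b p - 1] bounds [ln x - m p = ln p / b - m p] *)
    assert (Hmbp : 0 < m * b * p) by (repeat apply Rmult_lt_0_compat; auto).
    assert (Hln : 1 + ln (m * b * p) <= m * b * p).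
    { rewrite <- (exp_ln (m * b * p)) at 2 by auto. apply exp_ineq1_le. }
    rewrite !ln_mult in Hln by (try apply Rmult_lt_0_compat; auto).
    assert (Hlnx : ln x = ln p / b) by (unfold p; rewrite ln_rpow by auto; field; lra).
    rewrite <- (exp_ln x) at 1 by auto. rewrite <- exp_plus. apply exp_le.
    rewrite Hlnx, ln_mult by auto. apply Rmult_le_reg_r with b; auto.
    replace ((ln p / b + - (m * p)) * b) with (ln p - m * b * p) by (field; lra).
    replace (- (1 + (ln m + ln b)) / b * b) with (- (1 + (ln m + ln b))) by (field; lra). lra. }
  nra.
Qed.

Definition continuous_nonneg (h : R -> R) := forall x, 0 <= x -> continuous h x.

Lemma continuous_nonneg_minus h1 h2 : continuous_nonneg h1 -> continuous_nonneg h2 ->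
  continuous_nonneg (fun x => h1 x - h2 x).
Proof. intros H1 H2 x Hx; apply (continuous_minus h1 h2); auto. Qed.

Lemma continuous_nonneg_scal k h : continuous_nonneg h -> continuous_nonneg (fun x => k * h x).
Proof. intros Hh x Hx; apply (continuous_scal_r k h); auto. Qed.

Section ImproperIntegral.

Variable h : R -> R.
Hypothesis Hh : continuous_nonneg h.

Lemma ex_RInt_nonneg a c : 0 <= a -> 0 <= c -> ex_RInt h a c.
Proof.
  intros Ha Hc. apply (@ex_RInt_continuous R_CompleteNormedModule). intros z Hz. apply Hh.
  apply Rle_trans with (Rmin a c); [apply Rmin_glb |]; tauto.
Qed.

Lemma RInt_Chasles_nonneg a b c : 0 <= a -> 0 <= b -> 0 <= c ->
  RInt h a c = RInt h a b + RInt h b c.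
Proof.
  intros; symmetry; apply (RInt_Chasles (V := R_CompleteNormedModule)); apply ex_RInt_nonneg; auto.
Qed.

Lemma RInt_ge_const a c m : 0 <= a <= c -> (forall x, a <= x <= c -> m <= h x) ->
  (c - a) * m <= RInt h a c.
Proof.
  intros Hac Hm. rewrite <- (RInt_const a c m : RInt (fun _ => m) a c = (c - a) * m).
  apply RInt_le; [lra | apply ex_RInt_const | apply ex_RInt_nonneg; lra |].
  intros; apply Hm; lra.
Qed.

Lemma RInt_le_const a c m : 0 <= a <= c -> (forall x, a <= x <= c -> h x <= m) ->
  RInt h a c <= (c - a) * m.
Proof.
  intros Hac Hm. rewrite <- (RInt_const a c m : RInt (fun _ => m) a c = (c - a) * m).
  apply RInt_le; [lra | apply ex_RInt_nonneg; lra | apply ex_RInt_const |].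
  intros; apply Hm; lra.
Qed.

Variable M : R.
Hypothesis HM : forall x, 0 <= x -> Rabs (h x) <= M / (1 + x) ^ 2.

Lemma is_RInt_inv_sq a c : 0 <= a <= c ->
  is_RInt (fun t => M / (1 + t) ^ 2) a c (M / (1 + a) - M / (1 + c)).
Proof.
  intros Hac.
  replace (M / (1 + a) - M / (1 + c)) with (minus (- (M / (1 + c))) (- (M / (1 + a))))
    by (unfold minus, plus, opp; simpl; ring).
  apply (is_RInt_derive (fun t => - (M / (1 + t)))); intros x Hx;
    assert (0 <= x) by (apply Rle_trans with (Rmin a c); [apply Rmin_glb |]; lra).
  - auto_derive; [lra | field; lra].
  - apply (ex_derive_continuous (fun t => M / (1 + t) ^ 2)).
    auto_derive. apply Rgt_not_eq; nra.
Qed.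

Lemma decay_const_nonneg : 0 <= M.
Proof.
  specialize (HM 0 (Rle_refl 0)). pose proof (Rabs_pos (h 0)).
  replace ((1 + 0) ^ 2) with 1 in HM by ring. unfold Rdiv in HM; rewrite Rinv_1 in HM. lra.
Qed.

Lemma abs_RInt_le_decay a c : 0 <= a <= c -> Rabs (RInt h a c) <= M / (1 + a).
Proof.
  intros Hac. pose proof decay_const_nonneg as HM0.
  assert (Hc : 0 <= M / (1 + c)) by (apply Rdiv_le_0_compat; lra).
  apply Rle_trans with (M / (1 + a) - M / (1 + c)); [| lra].
  rewrite <- (is_RInt_unique _ _ _ _ (is_RInt_inv_sq a c Hac)).
  apply Rle_trans with (RInt (fun t => Rabs (h t)) a c).
  - apply abs_RInt_le; [lra | apply ex_RInt_nonneg; lra].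
  - apply RInt_le; [lra | apply (ex_RInt_norm h); apply ex_RInt_nonneg; lra
    | eexists; apply is_RInt_inv_sq; auto |].
    intros x Hx; apply HM; lra.
Qed.

Lemma ex_lim_RInt_decay : exists l : R, is_lim (fun c => RInt h 0 c) p_infty l.
Proof.
  assert (Hcauchy : exists y : R_CompleteSpace,
    filterlim (fun c => RInt h 0 c) (Rbar_locally p_infty) (locally y)).
  { apply filterlim_locally_cauchy. intros eps.
    pose proof (cond_pos eps) as Heps.
    exists (fun c => Rmax 0 (M / eps) < c). split; [exists (Rmax 0 (M / eps)); auto |].
    assert (Htail : forall u v, Rmax 0 (M / eps) < u -> u <= v -> Rabs (RInt h u v) < eps).
    { intros u v Hu Huv. pose proof (Rmax_l 0 (M / eps)). pose proof (Rmax_r 0 (M / eps)).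
      eapply Rle_lt_trans; [apply abs_RInt_le_decay; lra |].
      apply Rmult_lt_reg_r with ((1 + u) / eps); [apply Rdiv_lt_0_compat; lra |].
      replace (M / (1 + u) * ((1 + u) / eps)) with (M / eps) by (field; lra).
      replace (eps * ((1 + u) / eps)) with (1 + u) by (field; lra). lra. }
    intros u v Hu Hv. pose proof (Rmax_l 0 (M / eps)).
    assert (Huv : RInt h 0 v - RInt h 0 u = RInt h u v)
      by (rewrite (RInt_Chasles_nonneg 0 u v) by lra; ring).
    change (Rabs (RInt h 0 v - RInt h 0 u) < eps). rewrite Huv.
    destruct (Rle_lt_dec u v); [apply Htail; auto |].
    rewrite <- opp_RInt_swap by (apply ex_RInt_nonneg; lra).
    unfold opp; simpl; rewrite Rabs_Ropp. apply Htail; lra. }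
  destruct Hcauchy as [y Hy]. exists y. exact Hy.
Qed.

End ImproperIntegral.

Lemma is_lim_p_infty_ge (u : R -> R) (l B m : R) :
  is_lim u p_infty l -> (forall c, B <= c -> m <= u c) -> m <= l.
Proof.
  intros Hu Hm. apply (is_lim_le_loc (fun _ => m) u p_infty m l); [| apply is_lim_const | auto].
  exists B; intros; apply Hm; lra.
Qed.

Lemma is_lim_p_infty_le (u : R -> R) (l B m : R) :
  is_lim u p_infty l -> (forall c, B <= c -> u c <= m) -> l <= m.
Proof.
  intros Hu Hm. apply (is_lim_le_loc u (fun _ => m) p_infty l m); [| auto | apply is_lim_const].
  exists B; intros; apply Hm; lra.
Qed.

Lemma is_lim_p_infty_abs_le (u : R -> R) (l B m : R) :
  is_lim u p_infty l -> (forall c, B <= c -> Rabs (u c) <= m) -> Rabs l <= m.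
Proof.
  intros Hu Hm.
  assert (Hbetween : forall c, B <= c -> - m <= u c <= m) by (intros c Hc; apply Rabs_le_between, Hm, Hc).
  apply Rabs_le; split; [apply (is_lim_p_infty_ge u l B) | apply (is_lim_p_infty_le u l B)]; auto;
    intros c Hc; destruct (Hbetween c Hc); lra.
Qed.

Lemma is_lim_div_1_plus (C : R) : is_lim (fun c => C / (1 + c)) p_infty 0.
Proof.
  replace (Finite 0) with (Rbar_mult C (Rbar_inv p_infty)) by (simpl; f_equal; ring).
  apply (is_lim_mult (fun _ => C) (fun c => / (1 + c))); [apply is_lim_const | | easy].
  apply is_lim_inv; [| easy]. eapply is_lim_plus; [apply is_lim_const | apply is_lim_id | easy].
Qed.

Lemma is_lim_RInt_scal (h : R -> R) (k l : R) : continuous_nonneg h ->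
  is_lim (fun c => RInt h 0 c) p_infty l ->
  is_lim (fun c => RInt (fun x => k * h x) 0 c) p_infty (k * l).
Proof.
  intros Hh Hl.
  apply is_lim_ext_loc with (fun c => k * RInt h 0 c); [| apply (is_lim_scal_l _ k _ l Hl)].
  exists 0; intros c Hc. symmetry. apply (RInt_scal h 0 c k). apply ex_RInt_nonneg; auto; lra.
Qed.

Lemma is_lim_RInt_minus (h1 h2 : R -> R) (l1 l2 : R) :
  continuous_nonneg h1 -> continuous_nonneg h2 ->
  is_lim (fun c => RInt h1 0 c) p_infty l1 -> is_lim (fun c => RInt h2 0 c) p_infty l2 ->
  is_lim (fun c => RInt (fun x => h1 x - h2 x) 0 c) p_infty (l1 - l2).
Proof.
  intros Hh1 Hh2 Hl1 Hl2.
  apply is_lim_ext_loc with (fun c => RInt h1 0 c - RInt h2 0 c);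
    [| apply (is_lim_minus' _ _ _ _ _ Hl1 Hl2)].
  exists 0; intros c Hc. symmetry. apply (RInt_minus h1 h2 0 c); apply ex_RInt_nonneg; auto; lra.
Qed.

Lemma is_RInt_gen_of_is_lim (h : R -> R) (l : R) : continuous_nonneg h ->
  is_lim (fun c => RInt h 0 c) p_infty l -> is_RInt_gen h (at_point 0) (Rbar_locally p_infty) l.
Proof.
  intros Hh Hl P HP. destruct (Hl P HP) as [M HM].
  apply (Filter_prod _ _ _ (fun a => a = 0) (fun c => Rmax M 0 < c));
    [reflexivity | exists (Rmax M 0); auto |].
  intros a c -> Hc. pose proof (Rmax_l M 0). pose proof (Rmax_r M 0).
  exists (RInt h 0 c). split; [| apply HM; lra].
  apply (RInt_correct (V := R_CompleteNormedModule)), ex_RInt_nonneg; auto; lra.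
Qed.

Lemma continuous_pow_comp (h : R -> R) n x : continuous h x -> continuous (fun y => h y ^ n) x.
Proof.
  intros Hh; induction n; simpl; [apply continuous_const |].
  apply (continuous_mult h (fun y => h y ^ n)); auto.
Qed.

Ltac solve_continuous :=
  repeat match goal with
  | |- continuous (fun y => @?h y * @?k y) _ => apply (continuous_mult h k)
  | |- continuous (fun y => @?h y + @?k y) _ => apply (continuous_plus h k)
  | |- continuous (fun y => - @?h y) _ => apply (continuous_opp h)
  | |- continuous (fun y => / @?h y) _ => apply (continuous_Rinv_comp h)
  | |- continuous (fun y => exp (@?h y)) _ => apply (continuous_exp_comp h)
  | |- continuous (fun y => @?h y ^ _) _ => apply (continuous_pow_comp h)
  | |- continuous (fun y => rpow y _) _ => apply continuous_rpow
  | |- continuous (fun _ => _) _ => apply continuous_const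
  | |- continuous (fun y => y) _ => apply continuous_id
  end.

Lemma continuity_pt_lipschitz (F : R -> R) m C x : m < x ->
  (forall y z, m <= y <= z -> Rabs (F y - F z) <= C * (z - y)) -> continuity_pt F x.
Proof.
  intros Hx HF eps Heps. pose proof (Rabs_pos C) as HC.
  exists (Rmin (x - m) (eps / (Rabs C + 1))). split.
  { apply Rmin_glb_lt; [lra | apply Rdiv_lt_0_compat; lra]. }
  intros y [_ Hy]. simpl in *. unfold R_dist in *.
  pose proof (Rmin_l (x - m) (eps / (Rabs C + 1))).
  pose proof (Rmin_r (x - m) (eps / (Rabs C + 1))).
  assert (Hyx : Rabs (F y - F x) <= Rabs C * Rabs (y - x)).
  { pose proof (Rabs_def2 _ _ Hy). destruct (Rle_lt_dec y x).
    - rewrite (Rabs_minus_sym y x), (Rabs_pos_eq (x - y)) by lra.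
      eapply Rle_trans; [apply HF; lra | apply Rmult_le_compat_r; [lra | apply Rle_abs]].
    - rewrite (Rabs_minus_sym (F y)), (Rabs_pos_eq (y - x)) by lra.
      eapply Rle_trans; [apply HF; lra | apply Rmult_le_compat_r; [lra | apply Rle_abs]]. }
  apply Rle_lt_trans with (Rabs C * (eps / (Rabs C + 1))).
  - eapply Rle_trans; [exact Hyx | apply Rmult_le_compat_l; lra].
  - apply Rmult_lt_reg_r with (Rabs C + 1); [lra |].
    replace (Rabs C * (eps / (Rabs C + 1)) * (Rabs C + 1)) with (Rabs C * eps) by (field; lra).
    nra.
Qed.

Section Integrand.

Variable b : R.

Definition damp (L x : R) := exp (- (2 * L * rpow x b)).
Definition f (L x : R) := (1 - L * rpow x b) / (1 + x) * damp L x.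
Definition K (L x : R) := x / (1 + x) * damp L x.
Definition u (x : R) := (2 * b * x + 2 * b - 1) / (1 + x) ^ 2.
Definition g (L x : R) := damp L x * u x.
(* A junk value unless the limit exists, which [G_lim] shows for [L > 0]. *)
Definition G (L : R) := real (Lim (fun c => RInt (g L) 0 c) p_infty).

Lemma damp_pos L x : 0 < damp L x.
Proof. apply exp_pos. Qed.

Lemma damp_le_1 L x : 0 <= L -> damp L x <= 1.
Proof. intros HL; rewrite <- exp_0; apply exp_le. pose proof (rpow_ge0 x b); nra. Qed.

Hypothesis Hb : 0 < b < 1.

Lemma continuous_nonneg_f L : continuous_nonneg (f L).
Proof. intros x Hx; unfold f, damp, Rdiv, Rminus; solve_continuous; lra. Qed.

Lemma continuous_nonneg_g L : continuous_nonneg (g L).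
Proof. intros x Hx; unfold g, damp, u, Rdiv, Rminus; solve_continuous; try lra; apply pow_nonzero; lra. Qed.

Lemma continuous_nonneg_K_derive L : continuous_nonneg (fun x => 2 * b * f L x - g L x).
Proof.
  apply continuous_nonneg_minus; [apply continuous_nonneg_scal, continuous_nonneg_f | apply continuous_nonneg_g].
Qed.

Lemma is_derive_K L x : 0 <= x -> is_derive (K L) x (2 * b * f L x - g L x).
Proof.
  intros [Hx | <-].
  - apply is_derive_ext_loc with (fun y => y / (1 + y) * exp (- (2 * L * exp (b * ln y)))).
    + exists (mkposreal x Hx); intros y Hy. apply Rabs_def2 in Hy.
      unfold K, damp; rewrite rpow_pos; auto. simpl in Hy. unfold minus, plus, opp in Hy; simpl in Hy. lra.
    + unfold f, g, damp, u; rewrite rpow_pos by auto. auto_derive; [repeat split; lra | field; lra].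
  - replace (2 * b * f L 0 - g L 0) with ((fun y => damp L y / (1 + y)) 0)
      by (unfold f, g, damp, u; rewrite rpow_nonpos by lra; simpl; field).
    assert (HK : forall y, y * (damp L y / (1 + y)) = K L y) by (intros y; unfold K, Rdiv; ring).
    apply (is_derive_ext (fun y => y * (damp L y / (1 + y)))); [exact HK |].
    apply is_derive_mul_id_0. unfold damp, Rdiv; solve_continuous; lra.
Qed.

Lemma is_RInt_K_derive L c : 0 <= c -> is_RInt (fun x => 2 * b * f L x - g L x) 0 c (K L c).
Proof.
  intros Hc.
  replace (K L c) with (minus (K L c) (K L 0)) by (unfold K, minus, plus, opp; simpl; field; lra).
  apply (is_RInt_derive (K L)); intros x Hx; rewrite Rmin_left, Rmax_right in Hx by lra.
  - apply is_derive_K; lra.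
  - apply continuous_nonneg_K_derive; lra.
Qed.

Lemma damp_decay L : 0 < L -> exists C, forall x, 0 <= x -> (1 + x) * damp L x <= C.
Proof. intros HL; apply exp_rpow_decay; lra. Qed.

Lemma is_lim_K L : 0 < L -> is_lim (K L) p_infty 0.
Proof.
  intros HL. destruct (damp_decay L HL) as [C HC].
  apply (is_lim_le_le_loc (fun _ => 0) (fun c => C / (1 + c))); [| apply is_lim_const | apply is_lim_div_1_plus].
  exists 0; intros c Hc. specialize (HC c ltac:(lra)). pose proof (damp_pos L c).
  unfold K; split.
  - apply Rmult_le_pos; [apply Rdiv_le_0_compat |]; lra.
  - apply Rmult_le_reg_l with (1 + c); [lra |].
    replace ((1 + c) * (c / (1 + c) * damp L c)) with (c * damp L c) by (field; lra).
    replace ((1 + c) * (C / (1 + c))) with C by (field; lra). nra.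
Qed.

Lemma continuous_nonneg_u : continuous_nonneg u.
Proof. intros x Hx; unfold u, Rdiv, Rminus; solve_continuous; apply pow_nonzero; lra. Qed.

Lemma is_RInt_u a c : 0 <= a <= c ->
  is_RInt u a c ((2 * b * ln (1 + c) + / (1 + c)) - (2 * b * ln (1 + a) + / (1 + a))).
Proof.
  intros Hac. apply (is_RInt_derive (fun t => 2 * b * ln (1 + t) + / (1 + t)) u); intros x Hx;
    assert (0 <= x) by (apply Rle_trans with (Rmin a c); [apply Rmin_glb |]; lra).
  - auto_derive; [lra | unfold u; field; lra].
  - apply continuous_nonneg_u; auto.
Qed.

Lemma u_ge_m1 x : 0 <= x -> -1 <= u x.
Proof.
  intros Hx. apply Rmult_le_reg_r with ((1 + x) ^ 2); [nra |].
  unfold u. replace ((2 * b * x + 2 * b - 1) / (1 + x) ^ 2 * (1 + x) ^ 2)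
    with (2 * b * x + 2 * b - 1) by (field; lra). nra.
Qed.

Lemma abs_u_le x : 0 <= x -> (1 + x) * Rabs (u x) <= 2.
Proof.
  intros Hx. unfold u. rewrite Rabs_div, (Rabs_pos_eq ((1 + x) ^ 2)) by (try apply Rgt_not_eq; nra).
  replace ((1 + x) * (Rabs (2 * b * x + 2 * b - 1) / (1 + x) ^ 2))
    with (Rabs (2 * b * x + 2 * b - 1) / (1 + x)) by (field; lra).
  apply Rmult_le_reg_r with (1 + x); [lra |].
  replace (Rabs (2 * b * x + 2 * b - 1) / (1 + x) * (1 + x)) with (Rabs (2 * b * x + 2 * b - 1))
    by (field; lra).
  apply Rabs_le; split; nra.
Qed.

Lemma abs_damp_u_le a x M : 0 <= x -> Rabs a * (1 + x) <= M ->
  Rabs (a * u x) <= 2 * M / (1 + x) ^ 2.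
Proof.
  intros Hx Ha. pose proof (abs_u_le x Hx). pose proof (Rabs_pos a). pose proof (Rabs_pos (u x)).
  rewrite Rabs_mult. apply Rmult_le_reg_r with ((1 + x) ^ 2); [nra |].
  replace (2 * M / (1 + x) ^ 2 * (1 + x) ^ 2) with (2 * M) by (field; lra).
  replace (Rabs a * Rabs (u x) * (1 + x) ^ 2) with (((1 + x) * Rabs (u x)) * (Rabs a * (1 + x))) by ring.
  apply Rmult_le_compat; try apply Rmult_le_pos; lra.
Qed.

Lemma g_decay L : 0 < L -> exists M, forall x, 0 <= x -> Rabs (g L x) <= M / (1 + x) ^ 2.
Proof.
  intros HL. destruct (damp_decay L HL) as [C HC]. exists (2 * C). intros x Hx.
  apply abs_damp_u_le; auto. rewrite Rabs_pos_eq by (left; apply damp_pos). rewrite Rmult_comm; auto.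
Qed.

Lemma G_lim L : 0 < L -> is_lim (fun c => RInt (g L) 0 c) p_infty (G L).
Proof.
  intros HL. destruct (g_decay L HL) as [M HM].
  destruct (ex_lim_RInt_decay (g L) (continuous_nonneg_g L) M HM) as [l Hl].
  unfold G. rewrite (is_lim_unique _ _ _ Hl). exact Hl.
Qed.

Lemma is_RInt_gen_f L : 0 < L -> is_RInt_gen (f L) (at_point 0) (Rbar_locally p_infty) (G L / (2 * b)).
Proof.
  intros HL.
  assert (HK' : is_RInt_gen (fun x => 2 * b * f L x - g L x) (at_point 0) (Rbar_locally p_infty) 0).
  { apply is_RInt_gen_of_is_lim; [apply continuous_nonneg_K_derive |].
    apply (is_lim_ext_loc (K L)); [| apply is_lim_K; auto].
    exists 0; intros c Hc. symmetry. apply is_RInt_unique, is_RInt_K_derive; lra. }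
  assert (Hg : is_RInt_gen (g L) (at_point 0) (Rbar_locally p_infty) (G L))
    by (apply is_RInt_gen_of_is_lim; [apply continuous_nonneg_g | apply G_lim; auto]).
  apply (is_RInt_gen_ext (fun x => scal (/ (2 * b)) (plus (2 * b * f L x - g L x) (g L x)))).
  - apply filter_forall. intros [a c] x _. unfold scal, plus; simpl. unfold mult; simpl. field; lra.
  - replace (G L / (2 * b)) with (scal (/ (2 * b)) (plus 0 (G L)))
      by (unfold scal, plus; simpl; unfold mult; simpl; field; lra).
    exact (is_RInt_gen_scal _ _ _ (is_RInt_gen_plus _ _ _ _ HK' Hg)).
Qed.

Lemma damp_antitone L1 L2 x : L1 <= L2 -> damp L2 x <= damp L1 x.
Proof. intros HL; apply exp_le. pose proof (rpow_ge0 x b); nra. Qed.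

Lemma damp_lipschitz m : 0 < m -> exists C, forall L1 L2 x, m <= L1 <= L2 -> 0 <= x ->
  (damp L1 x - damp L2 x) * (1 + x) <= C * (L2 - L1).
Proof.
  intros Hm. destruct (exp_rpow_decay m b Hm (proj1 Hb)) as [C HC].
  exists (2 * C / m). intros L1 L2 x HL Hx. specialize (HC x Hx).
  pose proof (rpow_ge0 x b) as Hp. set (p := rpow x b) in *. set (e := exp (- (m * p))) in *.
  assert (He : 0 < e) by apply exp_pos.
  assert (Hdiff : damp L1 x - damp L2 x <= 2 * (L2 - L1) * p * damp L1 x).
  { unfold damp; fold p.
    replace (- (2 * L2 * p)) with (- (2 * L1 * p) + - (2 * (L2 - L1) * p)) by ring.
    rewrite exp_plus. pose proof (exp_ineq1_le (- (2 * (L2 - L1) * p))).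
    pose proof (exp_pos (- (2 * L1 * p))). nra. }
  assert (Hdamp : damp L1 x <= e * e) by (unfold damp, e; fold p; rewrite <- exp_plus; apply exp_le; nra).
  assert (Hpe : m * p * e <= 1).
  { assert (Hinv : e * exp (m * p) = 1) by (unfold e; rewrite <- exp_plus, Rplus_opp_l, exp_0; auto).
    pose proof (exp_ineq1_le (m * p)). nra. }
  assert (Hprod : p * damp L1 x * (1 + x) <= / m * C).
  { apply Rle_trans with ((m * p * e) * / m * (e * (1 + x))).
    - replace ((m * p * e) * / m * (e * (1 + x))) with (p * (e * e) * (1 + x)) by (field; lra).
      apply Rmult_le_compat_r; [lra | apply Rmult_le_compat_l; lra].
    - replace ((m * p * e) * / m * (e * (1 + x))) with (/ m * ((m * p * e) * ((1 + x) * e))) by ring.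
      apply Rmult_le_compat_l; [left; apply Rinv_0_lt_compat; auto |].
      assert (0 <= m * p * e) by (apply Rmult_le_pos; nra).
      assert (0 <= (1 + x) * e) by nra. nra. }
  apply Rle_trans with (2 * (L2 - L1) * (p * damp L1 x * (1 + x))).
  - replace (2 * (L2 - L1) * (p * damp L1 x * (1 + x)))
      with (2 * (L2 - L1) * p * damp L1 x * (1 + x)) by ring.
    apply Rmult_le_compat_r; lra.
  - replace (2 * C / m * (L2 - L1)) with (2 * (L2 - L1) * (/ m * C)) by (field; lra).
    apply Rmult_le_compat_l; lra.
Qed.

Lemma g_lipschitz m : 0 < m -> exists M, forall L1 L2 x, m <= L1 <= L2 -> 0 <= x ->
  Rabs (g L1 x - g L2 x) <= M * (L2 - L1) / (1 + x) ^ 2.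
Proof.
  intros Hm. destruct (damp_lipschitz m Hm) as [C HC]. exists (2 * C). intros L1 L2 x HL Hx.
  replace (g L1 x - g L2 x) with ((damp L1 x - damp L2 x) * u x) by (unfold g; ring).
  replace (2 * C * (L2 - L1)) with (2 * (C * (L2 - L1))) by ring.
  apply abs_damp_u_le; auto. pose proof (damp_antitone L1 L2 x (proj2 HL)).
  rewrite Rabs_pos_eq by lra. apply HC; auto.
Qed.

Lemma G_lipschitz m : 0 < m -> exists M, forall L1 L2, m <= L1 <= L2 ->
  Rabs (G L1 - G L2) <= M * (L2 - L1).
Proof.
  intros Hm. destruct (g_lipschitz m Hm) as [M HM]. exists M. intros L1 L2 HL.
  assert (Hg12 : continuous_nonneg (fun x => g L1 x - g L2 x))
    by (apply continuous_nonneg_minus; apply continuous_nonneg_g).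
  apply (is_lim_p_infty_abs_le _ _ 0 _ (is_lim_RInt_minus _ _ _ _
    (continuous_nonneg_g L1) (continuous_nonneg_g L2) (G_lim L1 ltac:(lra)) (G_lim L2 ltac:(lra)))).
  intros c Hc. replace (M * (L2 - L1)) with (M * (L2 - L1) / (1 + 0)) by (field; lra).
  apply (abs_RInt_le_decay _ Hg12); [intros x Hx; apply HM; auto | lra].
Qed.

Lemma continuity_pt_G L : 0 < L -> continuity_pt G L.
Proof.
  intros HL. destruct (G_lipschitz (L / 2)) as [M HM]; [lra |].
  apply (continuity_pt_lipschitz G (L / 2) M); [lra | exact HM].
Qed.

Lemma G_pos L : 1 / 2 <= b -> 0 < L -> 0 < G L.
Proof.
  intros Hb2 HL. set (m0 := exp (- (2 * L)) / 8).
  assert (Hm0 : 0 < m0) by (apply Rdiv_lt_0_compat; [apply exp_pos | lra]).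
  assert (Hu : forall x, 0 <= x -> 0 <= u x) by (intros x Hx; apply Rdiv_le_0_compat; nra).
  assert (Hg : forall x, 0 <= x -> 0 <= g L x)
    by (intros x Hx; apply Rmult_le_pos; [left; apply damp_pos | auto]).
  assert (Hmid : forall x, 1 / 2 <= x <= 1 -> m0 <= g L x).
  { intros x Hx. pose proof (rpow_le_1 x b ltac:(lra) ltac:(lra)). pose proof (rpow_ge0 x b).
    assert (Hd : exp (- (2 * L)) <= damp L x) by (apply exp_le; nra).
    assert (Hux : 1 / 8 <= u x).
    { apply Rmult_le_reg_r with ((1 + x) ^ 2); [nra |].
      unfold u. replace ((2 * b * x + 2 * b - 1) / (1 + x) ^ 2 * (1 + x) ^ 2)
        with (2 * b * x + 2 * b - 1) by (field; lra). nra. }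
    unfold m0, g. pose proof (exp_pos (- (2 * L))). nra. }
  apply Rlt_le_trans with ((1 - 1 / 2) * m0); [nra |].
  apply (is_lim_p_infty_ge _ _ 1 _ (G_lim L HL)). intros c Hc.
  pose proof (continuous_nonneg_g L) as Hcg.
  rewrite (RInt_Chasles_nonneg _ Hcg 0 (1 / 2) c), (RInt_Chasles_nonneg _ Hcg (1 / 2) 1 c) by lra.
  assert ((1 / 2 - 0) * 0 <= RInt (g L) 0 (1 / 2)) by (apply RInt_ge_const; auto; intros; try lra; apply Hg; lra).
  assert ((1 - 1 / 2) * m0 <= RInt (g L) (1 / 2) 1) by (apply RInt_ge_const; auto; lra).
  assert ((c - 1) * 0 <= RInt (g L) 1 c) by (apply RInt_ge_const; auto; intros; try lra; apply Hg; lra).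
  lra.
Qed.

Section SignChange.

Hypothesis Hb2 : b < 1 / 2.

Definition x0 := (1 - 2 * b) / (2 * b).
Definition c0 := rpow x0 b.
Definition gs (L x : R) := exp (2 * L * c0) * g L x.

Let p1 := rpow (x0 / 2) b.
Let u_gap := b * x0 / (1 + x0) ^ 2.

Lemma x0_pos : 0 < x0.
Proof. unfold x0; apply Rdiv_lt_0_compat; lra. Qed.

Lemma p1_lt_c0 : p1 < c0.
Proof. pose proof x0_pos; apply rpow_lt; lra. Qed.

Lemma u_gap_pos : 0 < u_gap.
Proof. pose proof x0_pos; apply Rdiv_lt_0_compat; nra. Qed.

Lemma u_eq x : 0 <= x -> u x = 2 * b * (x - x0) / (1 + x) ^ 2.
Proof. intros Hx; unfold u, x0; field; split; lra. Qed.

Lemma u_nonneg x : x0 <= x -> 0 <= u x.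
Proof. intros Hx; pose proof x0_pos; rewrite u_eq by lra; apply Rdiv_le_0_compat; nra. Qed.

Lemma u_nonpos x : 0 <= x <= x0 -> u x <= 0.
Proof.
  intros Hx; rewrite u_eq by lra. unfold Rdiv.
  assert (0 < / (1 + x) ^ 2) by (apply Rinv_0_lt_compat; nra).
  assert (2 * b * (x - x0) <= 0) by nra. nra.
Qed.

Lemma u_le_gap x : 0 <= x <= x0 / 2 -> u x <= - u_gap.
Proof.
  intros Hx. pose proof x0_pos. rewrite u_eq by lra. unfold u_gap, Rdiv.
  assert (Hinv : / (1 + x0) ^ 2 <= / (1 + x) ^ 2) by (apply Rinv_le_contravar; nra).
  assert (0 < / (1 + x0) ^ 2) by (apply Rinv_0_lt_compat; nra).
  assert (b * x0 * / (1 + x0) ^ 2 <= b * x0 * / (1 + x) ^ 2) by (apply Rmult_le_compat_l; nra).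
  assert (b * x0 <= 2 * b * (x0 - x)) by nra. nra.
Qed.

Lemma gs_eq L x : gs L x = exp (2 * L * (c0 - rpow x b)) * u x.
Proof.
  unfold gs, g, damp. rewrite <- Rmult_assoc, <- exp_plus. f_equal. f_equal. ring.
Qed.

Lemma gs_antitone L1 L2 x : L1 <= L2 -> 0 <= x -> gs L2 x <= gs L1 x.
Proof.
  intros HL Hx. rewrite !gs_eq. destruct (Rle_lt_dec x0 x) as [Hx0 | Hx0].
  - assert (c0 <= rpow x b) by (apply rpow_le; pose proof x0_pos; lra).
    apply Rmult_le_compat_r; [apply u_nonneg; auto | apply exp_le; nra].
  - assert (rpow x b <= c0) by (apply rpow_le; lra).
    assert (exp (2 * L1 * (c0 - rpow x b)) <= exp (2 * L2 * (c0 - rpow x b))) by (apply exp_le; nra).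
    pose proof (u_nonpos x ltac:(lra)). nra.
Qed.

Lemma gs_le_gap L x : 0 <= L -> 0 <= x <= x0 / 2 -> gs L x <= - (exp (2 * L * (c0 - p1)) * u_gap).
Proof.
  intros HL Hx. pose proof x0_pos. pose proof u_gap_pos. rewrite gs_eq.
  assert (rpow x b <= p1) by (apply rpow_le; lra).
  assert (exp (2 * L * (c0 - p1)) <= exp (2 * L * (c0 - rpow x b))) by (apply exp_le; nra).
  pose proof (u_le_gap x Hx). pose proof (exp_pos (2 * L * (c0 - p1))). nra.
Qed.

Lemma gs_gap L1 L2 x : 0 <= L1 <= L2 -> 0 <= x <= x0 / 2 ->
  (exp (2 * (L2 - L1) * (c0 - p1)) - 1) * u_gap <= gs L1 x - gs L2 x.
Proof.
  intros HL Hx. pose proof x0_pos. pose proof u_gap_pos. pose proof p1_lt_c0. rewrite !gs_eq.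
  assert (rpow x b <= p1) by (apply rpow_le; lra).
  set (t := c0 - rpow x b). assert (Ht : c0 - p1 <= t) by (unfold t; lra).
  replace (2 * L2 * t) with (2 * L1 * t + 2 * (L2 - L1) * t) by ring. rewrite exp_plus.
  assert (Hgrow1 : 1 <= exp (2 * L1 * t)) by (rewrite <- exp_0; apply exp_le; nra).
  assert (Hgrow2 : exp (2 * (L2 - L1) * (c0 - p1)) <= exp (2 * (L2 - L1) * t)) by (apply exp_le; nra).
  pose proof (exp_ineq1_le (2 * (L2 - L1) * (c0 - p1))).
  assert (0 <= 2 * (L2 - L1) * (c0 - p1)) by nra.
  pose proof (u_le_gap x Hx).
  set (A := exp (2 * L1 * t)) in *. set (B := exp (2 * (L2 - L1) * t)) in *.
  assert (0 <= (A - 1) * (B - 1)) by (apply Rmult_le_pos; lra).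
  replace (A * u x - A * B * u x) with ((A * (B - 1)) * - u x) by ring.
  apply Rmult_le_compat; nra.
Qed.

Lemma continuous_nonneg_gs L : continuous_nonneg (gs L).
Proof. apply continuous_nonneg_scal, continuous_nonneg_g. Qed.

Lemma gs_lim L : 0 < L -> is_lim (fun c => RInt (gs L) 0 c) p_infty (exp (2 * L * c0) * G L).
Proof. intros HL; apply is_lim_RInt_scal; [apply continuous_nonneg_g | apply G_lim; auto]. Qed.

Lemma G_scaled_decreasing L1 L2 : 0 < L1 < L2 ->
  exp (2 * L2 * c0) * G L2 < exp (2 * L1 * c0) * G L1.
Proof.
  intros HL. pose proof x0_pos. pose proof u_gap_pos. pose proof p1_lt_c0.
  set (delta := (exp (2 * (L2 - L1) * (c0 - p1)) - 1) * u_gap).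
  assert (Hdelta : 0 < delta).
  { apply Rmult_lt_0_compat; auto.
    pose proof (exp_ineq1_le (2 * (L2 - L1) * (c0 - p1))). nra. }
  assert (Hd : continuous_nonneg (fun x => gs L1 x - gs L2 x))
    by (apply continuous_nonneg_minus; apply continuous_nonneg_gs).
  assert (Hlim := is_lim_RInt_minus _ _ _ _ (continuous_nonneg_gs L1) (continuous_nonneg_gs L2)
    (gs_lim L1 ltac:(lra)) (gs_lim L2 ltac:(lra))).
  cut ((x0 / 2 - 0) * delta <= exp (2 * L1 * c0) * G L1 - exp (2 * L2 * c0) * G L2); [nra |].
  apply (is_lim_p_infty_ge _ _ (x0 / 2) _ Hlim). intros c Hc.
  rewrite (RInt_Chasles_nonneg _ Hd 0 (x0 / 2) c) by lra.
  assert ((x0 / 2 - 0) * delta <= RInt (fun x => gs L1 x - gs L2 x) 0 (x0 / 2))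
    by (apply RInt_ge_const; auto; try lra; intros; apply gs_gap; lra).
  assert ((c - x0 / 2) * 0 <= RInt (fun x => gs L1 x - gs L2 x) (x0 / 2) c).
  { apply RInt_ge_const; auto; try lra. intros x Hx.
    pose proof (gs_antitone L1 L2 x ltac:(lra) ltac:(lra)). lra. }
  lra.
Qed.

Lemma RInt_gs_head_le L : 0 <= L ->
  RInt (gs L) 0 x0 <= - (x0 / 2 * u_gap * exp (2 * L * (c0 - p1))).
Proof.
  intros HL. pose proof x0_pos. pose proof (continuous_nonneg_gs L) as Hgs.
  rewrite (RInt_Chasles_nonneg _ Hgs 0 (x0 / 2) x0) by lra.
  assert (RInt (gs L) 0 (x0 / 2) <= (x0 / 2 - 0) * - (exp (2 * L * (c0 - p1)) * u_gap))
    by (apply RInt_le_const; auto; try lra; intros; apply gs_le_gap; lra).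
  assert (RInt (gs L) (x0 / 2) x0 <= (x0 - x0 / 2) * 0).
  { apply RInt_le_const; auto; try lra. intros x Hx. rewrite gs_eq.
    pose proof (u_nonpos x ltac:(lra)). pose proof (exp_pos (2 * L * (c0 - rpow x b))). nra. }
  lra.
Qed.

Lemma RInt_gs_tail_le : exists B, forall L c, 1 <= L -> x0 <= c -> RInt (gs L) x0 c <= B.
Proof.
  pose proof x0_pos. destruct (g_decay 1 ltac:(lra)) as [M HM].
  set (B := exp (2 * 1 * c0) * M).
  assert (HMs : forall x, 0 <= x -> Rabs (gs 1 x) <= B / (1 + x) ^ 2).
  { intros x Hx. unfold gs, B. rewrite Rabs_mult, Rabs_pos_eq by (left; apply exp_pos).
    unfold Rdiv; rewrite (Rmult_assoc (exp _)).
    apply Rmult_le_compat_l; [left; apply exp_pos | apply HM; auto]. }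
  pose proof (decay_const_nonneg _ _ HMs). exists B. intros L c HL Hc.
  apply Rle_trans with (RInt (gs 1) x0 c).
  - apply RInt_le; [lra | apply ex_RInt_nonneg; [apply continuous_nonneg_gs | lra | lra] | |].
    + apply ex_RInt_nonneg; [apply continuous_nonneg_gs | lra | lra].
    + intros x Hx; apply gs_antitone; lra.
  - eapply Rle_trans; [apply Rle_abs |].
    eapply Rle_trans; [apply (abs_RInt_le_decay _ (continuous_nonneg_gs 1) _ HMs); lra |].
    apply Rmult_le_reg_r with (1 + x0); [lra |].
    replace (B / (1 + x0) * (1 + x0)) with B by (field; lra). nra.
Qed.

Lemma G_neg_large : exists L0, 0 < L0 /\ forall L, L0 <= L -> G L < 0.
Proof.
  pose proof x0_pos. pose proof u_gap_pos. pose proof p1_lt_c0.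
  destruct RInt_gs_tail_le as [B HB].
  set (A := x0 / 2 * u_gap). set (r := c0 - p1).
  assert (HA : 0 < A) by (unfold A; nra). assert (Hr : 0 < r) by (unfold r; lra).
  exists (Rmax 1 (B / (2 * A * r))). split; [pose proof (Rmax_l 1 (B / (2 * A * r))); lra |].
  intros L HL. pose proof (Rmax_l 1 (B / (2 * A * r))). pose proof (Rmax_r 1 (B / (2 * A * r))).
  assert (Hbeat : B < A * exp (2 * L * r)).
  { pose proof (exp_ineq1_le (2 * L * r)).
    assert (B <= A * (2 * L * r)).
    { apply Rmult_le_reg_r with (/ (2 * A * r)); [apply Rinv_0_lt_compat; nra |].
      replace (A * (2 * L * r) * / (2 * A * r)) with L by (field; lra). unfold Rdiv in *; lra. }
    nra. }
  cut (exp (2 * L * c0) * G L <= - (A * exp (2 * L * r)) + B).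
  { pose proof (exp_pos (2 * L * c0)). nra. }
  apply (is_lim_p_infty_le _ _ x0 _ (gs_lim L ltac:(lra))). intros c Hc.
  rewrite (RInt_Chasles_nonneg _ (continuous_nonneg_gs L) 0 x0 c) by lra.
  pose proof (RInt_gs_head_le L ltac:(lra)). pose proof (HB L c ltac:(lra) Hc).
  unfold A, r in *. lra.
Qed.

Lemma RInt_u_ge : exists b1, x0 <= b1 /\ 2 * x0 + 3 <= RInt u x0 b1.
Proof.
  pose proof x0_pos. set (b1 := (1 + x0) * exp ((x0 + 2) / b) - 1).
  assert (Hq : 0 < (x0 + 2) / b) by (apply Rdiv_lt_0_compat; lra).
  assert (Hb1 : x0 <= b1) by (pose proof (exp_ineq1_le ((x0 + 2) / b)); unfold b1; nra).
  exists b1. split; auto.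
  rewrite (is_RInt_unique _ _ _ _ (is_RInt_u x0 b1 ltac:(lra))).
  replace (1 + b1) with ((1 + x0) * exp ((x0 + 2) / b)) by (unfold b1; ring).
  rewrite ln_mult, ln_exp by (try apply exp_pos; lra).
  replace (2 * b * (ln (1 + x0) + (x0 + 2) / b)) with (2 * b * ln (1 + x0) + 2 * (x0 + 2))
    by (field; lra).
  assert (0 < / ((1 + x0) * exp ((x0 + 2) / b)))
    by (apply Rinv_0_lt_compat, Rmult_lt_0_compat; [lra | apply exp_pos]).
  assert (/ (1 + x0) <= 1) by (rewrite <- Rinv_1; apply Rinv_le_contravar; lra). lra.
Qed.

Lemma G_pos_small : exists L, 0 < L /\ 0 < G L.
Proof.
  pose proof x0_pos. destruct RInt_u_ge as [b1 [Hb1 Hu]].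
  set (P1 := rpow b1 b). assert (HP1 : 0 < P1) by (apply rpow_gt0; lra).
  set (L := / (4 * P1)). assert (HL : 0 < L) by (apply Rinv_0_lt_compat; lra).
  exists L. split; auto.
  assert (Hdamp : forall x, 0 <= x <= b1 -> / 2 <= damp L x).
  { intros x Hx. assert (rpow x b <= P1) by (apply rpow_le; lra).
    apply Rle_trans with (exp (- (2 * L * P1))); [| apply exp_le; nra].
    replace (2 * L * P1) with (/ 2) by (unfold L; field; lra).
    pose proof (exp_ineq1_le (- / 2)). lra. }
  apply Rlt_le_trans with (3 / 2); [lra |].
  apply (is_lim_p_infty_ge _ _ b1 _ (G_lim L HL)). intros c Hc.
  pose proof (continuous_nonneg_g L) as Hg.
  rewrite (RInt_Chasles_nonneg _ Hg 0 x0 c), (RInt_Chasles_nonneg _ Hg x0 b1 c) by lra.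
  assert ((x0 - 0) * -1 <= RInt (g L) 0 x0).
  { apply RInt_ge_const; auto; try lra. intros x Hx. unfold g.
    pose proof (damp_le_1 L x ltac:(lra)). pose proof (damp_pos L x).
    pose proof (u_ge_m1 x ltac:(lra)). pose proof (u_nonpos x ltac:(lra)). nra. }
  assert (/ 2 * RInt u x0 b1 <= RInt (g L) x0 b1).
  { assert (Hu_int : ex_RInt u x0 b1)
      by (apply ex_RInt_nonneg; [apply continuous_nonneg_u | lra | lra]).
    rewrite <- (RInt_scal u x0 b1 (/ 2) Hu_int
      : RInt (fun x => / 2 * u x) x0 b1 = / 2 * RInt u x0 b1).
    apply RInt_le; [lra | apply (ex_RInt_scal u); auto | apply ex_RInt_nonneg; auto; lra |].
    intros x Hx. unfold g. pose proof (Hdamp x ltac:(lra)). pose proof (u_nonneg x ltac:(lra)). nra. }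
  assert ((c - b1) * 0 <= RInt (g L) b1 c).
  { apply RInt_ge_const; auto; try lra. intros x Hx. unfold g.
    pose proof (damp_pos L x). pose proof (u_nonneg x ltac:(lra)). nra. }
  lra.
Qed.

Lemma G_has_zero : exists L, 0 < L /\ G L = 0.
Proof.
  destruct G_pos_small as [La [HLa HGa]]. destruct G_neg_large as [L0 [HL0 HG0]].
  set (Lb := Rmax La L0 + 1). pose proof (Rmax_l La L0). pose proof (Rmax_r La L0).
  assert (HGb : G Lb < 0) by (apply HG0; unfold Lb; lra).
  destruct (Ranalysis5.IVT_interv (fun L => - G L) La Lb) as [z [Hz HGz]];
    [intros L HL; apply continuity_pt_opp, continuity_pt_G; lra | unfold Lb; lra | lra | lra |].
  exists z; split; lra.
Qed.

Lemma G_zero_unique L1 L2 : 0 < L1 -> 0 < L2 -> G L1 = 0 -> G L2 = 0 -> L1 = L2.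
Proof.
  intros H1 H2 HG1 HG2. destruct (Rtotal_order L1 L2) as [Hlt | [Heq | Hgt]]; auto; exfalso.
  - pose proof (G_scaled_decreasing L1 L2 ltac:(lra)) as Hdec. rewrite HG1, HG2 in Hdec. lra.
  - pose proof (G_scaled_decreasing L2 L1 ltac:(lra)) as Hdec. rewrite HG1, HG2 in Hdec. lra.
Qed.

End SignChange.

End Integrand.

Lemma solves_iff_G alpha L : 0 < 2 / alpha < 1 -> 0 < L -> solves alpha L <-> G (2 / alpha) L = 0.
Proof.
  intros Hb HL. pose proof (is_RInt_gen_f (2 / alpha) Hb L HL) as Hf.
  change (f (2 / alpha) L) with (integrand alpha L) in Hf. unfold solves. split.
  - intros Hs. apply (is_RInt_gen_unique (V := R_CompleteNormedModule)) in Hs, Hf.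
    rewrite Hs in Hf. assert (Hb0 : 2 * (2 / alpha) <> 0) by (apply Rgt_not_eq; lra).
    apply (Rmult_eq_reg_r (/ (2 * (2 / alpha)))); [| apply Rinv_neq_0_compat; exact Hb0].
    rewrite Rmult_0_l. exact (eq_sym Hf).
  - intros HG. rewrite HG in Hf. unfold Rdiv in Hf. rewrite Rmult_0_l in Hf. exact Hf.
Qed.

Theorem lemma4 (alpha : R) (Halpha : 2 < alpha) :
  (alpha <= 4 -> forall L : R, 0 < L -> ~ solves alpha L) /\
  (4 < alpha -> exists! L : R, 0 < L /\ solves alpha L).
Proof.
  assert (Hb_alpha : 2 / alpha * alpha = 2) by (field; lra).
  assert (Hb : 0 < 2 / alpha < 1).
  { split; [apply Rdiv_lt_0_compat | apply Rmult_lt_reg_r with alpha; [| rewrite Hb_alpha]]; lra. }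
  split.
  - intros H4 L HL Hs. apply (solves_iff_G alpha L Hb HL) in Hs.
    assert (Hb2 : 1 / 2 <= 2 / alpha)
      by (apply Rmult_le_reg_r with alpha; [| rewrite Hb_alpha]; lra).
    pose proof (G_pos (2 / alpha) Hb L Hb2 HL). lra.
  - intros H4. assert (Hb2 : 2 / alpha < 1 / 2)
      by (apply Rmult_lt_reg_r with alpha; [| rewrite Hb_alpha]; lra).
    destruct (G_has_zero (2 / alpha) Hb Hb2) as [L [HL HG]].
    exists L. split; [split; [auto | apply solves_iff_G; auto] |].
    intros L' [HL' Hs']. apply (G_zero_unique (2 / alpha) Hb Hb2); auto. apply solves_iff_G; auto.
Qed.
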